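(* For all $f,g\in\mathcal B_1(2^\omega)$, $f\le_{\mathbf{tt1}} g$ if and only if $|f|_\alpha\le|g|_\alpha$.
   Context: $\mathcal B_1(2^\omega)$: functions $2^\omega\to\mathbb R$ that are pointwise limits of sequences of continuous functions. Optimal derivation sequence: for $\mathcal C\subseteq\mathcal P(X)$, $X$ a compact metric space, define $P^0=X$, $P^{\nu+1}=P^\nu\setminus\bigcup\{U\subseteq X \text{ open}: P^\nu\cap U\subseteq C\text{ for some }C\in\mathcal C\}$, and $P^\lambda=\bigcap_{\nu<\lambda}P^\nu$ for limit $\lambda$. Bourgain rank: for $f\in\mathcal B_1(2^\omega)$, $p\in\mathbb Q$, $\varepsilon\in\mathbb Q^+$, let $P^\nu_{f,p,\varepsilon}$ be the optimal derivation sequence for $\{f^{-1}((-\infty,p+\varepsilon)),f^{-1}((p-\varepsilon,\infty))\}$, let $\alpha(f,p,\varepsilon)$ be the least $\nu$ with $P^\nu_{f,p,\varepsilon}=\emptyset$, and $|f|_\alpha=\sup_{p,\varepsilon}\alpha(f,p,\varepsilon)$. Questions: for $y\in\mathbb R$, $p\in\mathbb Q$, $\varepsilon\in\mathbb Q^+$, a bit $b\in\{0,1\}$ is a correct answer to ''$y\lesssim_\varepsilon p$'' if either $b=1$ and $y<p+\varepsilon$, or $b=0$ and $y>p-\varepsilon$. $f\le_{\mathbf{tt1}} g$ means: for every $p\in\mathbb Q,\varepsilon\in\mathbb Q^+$ there are a continuous $k:2^\omega\to2^\omega$, $q\in\mathbb Q$, $\delta\in\mathbb Q^+$, $r\in\omega$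 and $h:2^{r+1}\to\{0,1\}$ such that for every $A\in2^\omega$, if $b$ is a correct answer to $g(k(A))\lesssim_\delta q$ then $h(A\upharpoonright r,b)$ is a correct answer to $f(A)\lesssim_\varepsilon p$. *)

From Stdlib Require Import Reals QArith Qreals List.
Open Scope R_scope.

Definition Cantor := nat -> bool.

Definition agree (n : nat) (x y : Cantor) : Prop :=
  forall i, (i < n)%nat -> x i = y i.

Definition is_open (U : Cantor -> Prop) : Prop :=
  forall x, U x -> exists n, forall y, agree n x y -> U y.

Definition cont_R (f : Cantor -> R) : Prop :=
  forall x (e : R), 0 < e -> exists n, forall y, agree n x y -> Rabs (f y - f x) < e.

Definition cont_C (k : Cantor -> Cantor) : Prop :=
  forall x m, exists n, forall y, agree n x y -> agree m (k x) (k y).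

Definition Baire1 (f : Cantor -> R) : Prop :=
  exists fn : nat -> Cantor -> R,
    (forall n, cont_R (fn n)) /\ (forall x, Un_cv (fun n => fn n x) (f x)).

(** Countable ordinals as Brouwer trees; [OL h] denotes sup_n h n. *)
Inductive Ord : Type :=
| OZ : Ord
| OS : Ord -> Ord
| OL : (nat -> Ord) -> Ord.

Inductive ord_le : Ord -> Ord -> Prop :=
| le_Z : forall b, ord_le OZ b
| le_S : forall a b, ord_lt a b -> ord_le (OS a) b
| le_L : forall h b, (forall n, ord_le (h n) b) -> ord_le (OL h) b
with ord_lt : Ord -> Ord -> Prop :=
| lt_S : forall a b, ord_le a b -> ord_lt a (OS b)
| lt_L : forall a h n, ord_lt a (h n) -> ord_lt a (OL h).

Definition deriv_step (C : (Cantor -> Prop) -> Prop) (P : Cantor -> Prop) : Cantor -> Prop :=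
  fun x => P x /\
    ~ (exists U, is_open U /\ U x /\
         exists C0, C C0 /\ forall y, P y -> U y -> C0 y).

Fixpoint deriv_seq (C : (Cantor -> Prop) -> Prop) (nu : Ord) : Cantor -> Prop :=
  match nu with
  | OZ => fun _ => True
  | OS a => deriv_step C (deriv_seq C a)
  | OL h => fun x => forall n, deriv_seq C (h n) x
  end.

Definition bfam (f : Cantor -> R) (p e : Q) : (Cantor -> Prop) -> Prop :=
  fun C0 => C0 = (fun y => f y < Q2R p + Q2R e) \/ C0 = (fun y => Q2R p - Q2R e < f y).

Definition P_seq (f : Cantor -> R) (p e : Q) (nu : Ord) : Cantor -> Prop :=
  deriv_seq (bfam f p e) nu.

Definition is_alpha (f : Cantor -> R) (p e : Q) (a : Ord) : Prop :=
  (forall x, ~ P_seq f p e a x) /\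
  (forall b, (forall x, ~ P_seq f p e b x) -> ord_le a b).

(** r is (a representative of) |f|_alpha = sup_{p, e > 0} alpha(f,p,e) *)
Definition is_rank (f : Cantor -> R) (r : Ord) : Prop :=
  (forall p e a, (0 < e)%Q -> is_alpha f p e a -> ord_le a r) /\
  (forall r', (forall p e a, (0 < e)%Q -> is_alpha f p e a -> ord_le a r') -> ord_le r r').

Definition correct (y : R) (p e : Q) (b : bool) : Prop :=
  (b = true /\ y < Q2R p + Q2R e) \/ (b = false /\ Q2R p - Q2R e < y).

Definition prefix (A : Cantor) (r : nat) : list bool := map A (seq 0 r).

Definition tt1 (f g : Cantor -> R) : Prop :=
  forall p e : Q, (0 < e)%Q ->
    exists (k : Cantor -> Cantor) (q d : Q) (r : nat) (h : list bool -> bool -> bool),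
      cont_C k /\ (0 < d)%Q /\
      forall (A : Cantor) (b : bool),
        correct (g (k A)) q d b -> correct (f A) p e (h (prefix A r) b).

(* 1. Brouwer-tree ordinals: ord_le is a well-founded total preorder, so
      every inhabited class of ordinals has a least element.
   2. Cantor space is compact: a directed family of nonempty closed sets has
      a common point; decreasing sequences of basic cylinders converge.
   3. Optimal derivation sequences are decreasing sequences of closed sets,
      monotone in the family being derived.
   4. Baire category for a Baire class 1 function f: every nonempty closed
      set has a relatively open piece on which f is nearly constant.  Hence
      every derivation sequence of f strictly shrinks and reaches the empty
      set at a countable ordinal, so alpha(f,p,e) and |f|_alpha exist.
   5. (=>) A tt1-reduction pulls derivation sequences back: outside the
      points where the answer map h is constant, P^nu_{f,p,e} lies inside
      k^-1(P^nu_{g,q,d}), hence alpha(f,p,e) <= alpha(g,q,d).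
   6. (<=) If |f|_alpha <= |g|_alpha, fix beta with P^(beta+1)_{f,p,e} empty
      and a point y* of P^beta_{g,q,d} where g is far from q.  Reading the
      bits of A one at a time we move a point of g-space that lies in the
      derivative of g at the local rank of the current cylinder around A and
      whose value of g encodes the answer for f(A) up to a sign fixed by the
      first r bits.  It moves only when the local rank drops, hence finitely
      often; its limit is the continuous reduction k(A). *)

From Stdlib Require Import Reals QArith Qreals List Lra Lia.
From Stdlib Require Import Classical ClassicalEpsilon FunctionalExtensionality.
From Stdlib Require Import PArith ZArith.
From Stdlib Require Arith.Cantor.

Open Scope R_scope.

(** * Brouwer-tree ordinals *)

Lemma ord_le_S_inv a b : ord_le (OS a) b -> ord_lt a b.
Proof. intros H; inversion H; subst; auto. Qed.

Lemma ord_le_L_inv h b : ord_le (OL h) b -> forall n, ord_le (h n) b.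
Proof. intros H; inversion H; subst; auto. Qed.

Lemma ord_lt_S_inv a b : ord_lt a (OS b) -> ord_le a b.
Proof. intros H; inversion H; subst; auto. Qed.

Lemma ord_lt_L_inv a h : ord_lt a (OL h) -> exists n, ord_lt a (h n).
Proof. intros H; inversion H; subst; eauto. Qed.

Lemma ord_not_lt_Z a : ~ ord_lt a OZ.
Proof. intros H; inversion H. Qed.

(* Mixed transitivity at a fixed left end [a], assuming plain transitivity
   of [ord_le] there; this breaks the mutual induction for [ord_le_trans]. *)
Lemma le_lt_trans_at a : (forall b c, ord_le a b -> ord_le b c -> ord_le a c) ->
  forall b c, ord_le a b -> ord_lt b c -> ord_lt a c.
Proof.
  intros Htr b c Hab Hbc. revert Hab. induction Hbc; intros Hab.
  - constructor. eauto.
  - econstructor. eauto.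
Qed.

Lemma lt_le_trans_at a b : ord_lt a b ->
  (forall b c, ord_le a b -> ord_le b c -> ord_le a c) ->
  forall c, ord_le b c -> ord_lt a c.
Proof.
  induction 1; intros Htr c Hbc.
  - apply ord_le_S_inv in Hbc. eapply le_lt_trans_at; eauto.
  - apply IHord_lt; auto. eapply ord_le_L_inv; eauto.
Qed.

Lemma ord_le_trans a b c : ord_le a b -> ord_le b c -> ord_le a c.
Proof.
  revert b c. induction a as [|a IH|h IH]; intros b c Hab Hbc.
  - constructor.
  - apply ord_le_S_inv in Hab. constructor. eapply lt_le_trans_at; eauto.
  - constructor. intros n. eapply IH; [|eauto]. eapply ord_le_L_inv; eauto.
Qed.

Lemma ord_le_lt_trans a b c : ord_le a b -> ord_lt b c -> ord_lt a c.
Proof. apply le_lt_trans_at. intros; eapply ord_le_trans; eauto. Qed.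

Lemma ord_lt_le_trans a b c : ord_lt a b -> ord_le b c -> ord_lt a c.
Proof. intros H; apply (lt_le_trans_at a b H). intros; eapply ord_le_trans; eauto. Qed.

Lemma ord_le_L a h n : ord_le a (h n) -> ord_le a (OL h).
Proof.
  revert n. induction a as [|a IH|k IH]; intros n H.
  - constructor.
  - constructor. apply ord_le_S_inv in H. econstructor; eauto.
  - constructor. intros m. eapply IH. eapply ord_le_L_inv; eauto.
Qed.

Lemma ord_le_refl a : ord_le a a.
Proof.
  induction a as [|a IH|h IH].
  - constructor.
  - constructor. constructor. auto.
  - constructor. intros n. eapply ord_le_L; eauto.
Qed.

Lemma ord_lt_S a : ord_lt a (OS a).
Proof. constructor. apply ord_le_refl. Qed.

Lemma ord_lt_le a b : ord_lt a b -> ord_le a b.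
Proof.
  revert b. induction a as [|a IH|h IH]; intros b H.
  - constructor.
  - remember (OS a) as x. revert a IH Heqx. induction H; intros a' IH Heqx; subst.
    + apply ord_le_S_inv in H. constructor. constructor. auto.
    + eapply ord_le_L. eapply IHord_lt; eauto.
  - constructor. intros n. apply IH. eapply ord_le_lt_trans; [|eauto].
    eapply ord_le_L; apply ord_le_refl.
Qed.

Lemma ord_le_S_mono a b : ord_le a b -> ord_le (OS a) (OS b).
Proof. intros; constructor; constructor; auto. Qed.

Lemma ord_wf : well_founded ord_lt.
Proof.
  assert (H : forall a b, ord_lt b a -> Acc ord_lt b).
  { induction a as [|a IH|h IH]; intros b Hb.
    - exfalso; eapply ord_not_lt_Z; eauto.
    - apply ord_lt_S_inv in Hb. constructor. intros c Hc. apply IH.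
      eapply ord_lt_le_trans; eauto.
    - apply ord_lt_L_inv in Hb. destruct Hb as [n Hn]. eapply IH; eauto. }
  intros a. constructor. intros b Hb. eapply H; eauto.
Qed.

Lemma ord_lt_irrefl a : ~ ord_lt a a.
Proof. induction (ord_wf a) as [a _ IH]. intros H. eapply IH; eauto. Qed.

Lemma ord_le_lt_false a b : ord_le a b -> ord_lt b a -> False.
Proof. intros H1 H2. eapply ord_lt_irrefl. eapply ord_le_lt_trans; eauto. Qed.

Lemma ord_total a b : ord_le a b \/ ord_lt b a.
Proof.
  revert b. induction a as [|a IH|h IH]; intros b.
  - left; constructor.
  - induction b as [|b _|k IHk].
    + right. constructor. constructor.
    + destruct (IH b) as [H|H].
      * left. constructor. constructor. auto.
      * right. constructor. constructor. auto.
    + destruct (classic (exists n, ord_le (OS a) (k n))) as [[n Hn]|Hn].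
      * left. eapply ord_le_L; eauto.
      * right. constructor. constructor. intros n.
        destruct (IHk n) as [H|H]; [exfalso; eauto|].
        apply ord_lt_S_inv; auto.
  - destruct (classic (forall n, ord_le (h n) b)) as [H|H].
    + left; constructor; auto.
    + apply not_all_ex_not in H. destruct H as [n Hn].
      destruct (IH n b) as [H|H]; [tauto|]. right. econstructor; eauto.
Qed.

Lemma ord_not_le a b : ~ ord_le a b -> ord_lt b a.
Proof. intros H; destruct (ord_total a b); tauto. Qed.

Lemma ord_not_lt a b : ~ ord_lt a b -> ord_le b a.
Proof. intros H; destruct (ord_total b a); tauto. Qed.

Lemma ord_min (P : Ord -> Prop) b : P b -> exists a, P a /\ forall c, P c -> ord_le a c.
Proof.
  induction (ord_wf b) as [b _ IH]. intros Hb.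
  destruct (classic (forall c, P c -> ord_le b c)) as [H|H]; [eauto|].
  apply not_all_ex_not in H. destruct H as [c Hc].
  apply imply_to_and in Hc. destruct Hc as [Hc1 Hc2].
  apply (IH c); auto. apply ord_not_le; auto.
Qed.

(** * Cantor space *)

(* The first [n] bits of [x], most recent bit first; cons-lists of this
   shape are the natural input of bit-by-bit constructions. *)
Fixpoint rprefix (x : Cantor) (n : nat) : list bool :=
  match n with O => nil | S n => x n :: rprefix x n end.

Lemma rprefix_length x n : length (rprefix x n) = n.
Proof. induction n; simpl; auto. Qed.

Lemma rprefix_agree x y n : rprefix x n = rprefix y n <-> agree n x y.
Proof.
  induction n; simpl; split; intros H.
  - intros i Hi; lia.
  - auto.
  - injection H; intros H1 H2. intros i Hi.
    destruct (Nat.eq_dec i n); [subst; auto|]. apply IHn; auto; lia.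
  - f_equal. apply H; lia. apply IHn. intros i Hi; apply H; lia.
Qed.

Lemma rev_prefix A r : rev (prefix A r) = rprefix A r.
Proof.
  induction r; [reflexivity|]. unfold prefix in *.
  rewrite seq_S, map_app, rev_app_distr, IHr. reflexivity.
Qed.

Lemma prefix_agree x z r : agree r x z -> prefix x r = prefix z r.
Proof.
  intros H. unfold prefix. apply map_ext_in. intros i Hi. apply in_seq in Hi.
  apply H. lia.
Qed.

Lemma agree_refl n x : agree n x x.
Proof. intros i _; auto. Qed.

Lemma agree_sym n x y : agree n x y -> agree n y x.
Proof. intros H i Hi; symmetry; auto. Qed.

Lemma agree_trans n x y z : agree n x y -> agree n y z -> agree n x z.
Proof. intros H1 H2 i Hi; rewrite H1; auto. Qed.

Lemma agree_le m n x y : (m <= n)%nat -> agree n x y -> agree m x y.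
Proof. intros H1 H2 i Hi; apply H2; lia. Qed.

Definition closed (F : Cantor -> Prop) : Prop :=
  forall x, (forall n, exists y, agree n x y /\ F y) -> F x.

Definition cylset (l : list bool) (y : Cantor) : Prop := rprefix y (length l) = l.

Definition incl (l l' : list bool) : Prop := forall z, cylset l z -> cylset l' z.

Lemma cylset_rprefix x n y : cylset (rprefix x n) y <-> agree n x y.
Proof.
  unfold cylset; rewrite rprefix_length. split; intros H.
  - apply rprefix_agree; auto.
  - symmetry; apply rprefix_agree; auto.
Qed.

Lemma incl_cons b l : incl (b :: l) l.
Proof. intros z H. unfold cylset in *; simpl in H. injection H; auto. Qed.

Lemma incl_rprefix A n m : (n <= m)%nat -> incl (rprefix A m) (rprefix A n).
Proof.
  intros H z Hz. apply cylset_rprefix. apply cylset_rprefix in Hz. eapply agree_le; eauto.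
Qed.

Lemma open_cyl x n : is_open (fun y => agree n x y).
Proof. intros y Hy. exists n. intros w Hw. eapply agree_trans; eauto. Qed.

Lemma closed_compl_open (F : Cantor -> Prop) y : closed F -> ~ F y ->
  exists L, forall w, agree L y w -> ~ F w.
Proof.
  intros HF Hy. apply NNPP. intros Hn. apply Hy. apply HF. intros L.
  apply NNPP. intros H2. apply Hn. exists L. intros w Hw Fw. apply H2. eauto.
Qed.

Lemma cont_open (k : Cantor -> Cantor) V : cont_C k -> is_open V -> is_open (fun z => V (k z)).
Proof.
  intros Hk HV z Hz. destruct (HV _ Hz) as [m Hm]. destruct (Hk z m) as [n Hn].
  exists n. intros w Hw. apply Hm. apply Hn; auto.
Qed.

Fixpoint build (nb : list bool -> bool) (n : nat) : list bool :=
  match n with O => nil | S n => nb (build nb n) :: build nb n end.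

Lemma build_rprefix nb n : rprefix (fun i => nb (build nb i)) n = build nb n.
Proof. induction n; simpl; auto. rewrite IHn; auto. Qed.

Lemma koenig (Inv : list bool -> Prop) : Inv nil ->
  (forall l, Inv l -> Inv (true :: l) \/ Inv (false :: l)) ->
  exists z, forall n, Inv (rprefix z n).
Proof.
  intros H0 HS.
  set (nb := fun l => if excluded_middle_informative (Inv (true :: l)) then true else false).
  exists (fun i => nb (build nb i)). intros n. rewrite build_rprefix.
  induction n; simpl; auto.
  unfold nb at 1. destruct excluded_middle_informative; auto.
  destruct (HS _ IHn); tauto.
Qed.

(* Compactness: a directed family of nonempty closed sets has a common
   point.  The branch follows the cylinders meeting every member. *)
Lemma directed_compact (I : Type) (F : I -> Cantor -> Prop) :
  (forall i, closed (F i)) -> (forall i, exists x, F i x) ->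
  (forall i j, exists k, forall x, F k x -> F i x /\ F j x) ->
  exists x, forall i, F i x.
Proof.
  intros Hc Hne Hd.
  destruct (koenig (fun l => forall i, exists x, F i x /\ cylset l x)) as [z Hz].
  - intros i. destruct (Hne i) as [x Hx]. exists x; split; auto. reflexivity.
  - intros l Hl. apply NNPP. intros Hn. apply not_or_and in Hn. destruct Hn as [H1 H2].
    apply not_all_ex_not in H1. destruct H1 as [i1 H1].
    apply not_all_ex_not in H2. destruct H2 as [i2 H2].
    destruct (Hd i1 i2) as [k Hk]. destruct (Hl k) as [x [Hx Hxl]].
    destruct (Hk x Hx) as [Hx1 Hx2].
    destruct (x (length l)) eqn:E; [apply H1|apply H2]; exists x; split; auto;
      unfold cylset in *; simpl; rewrite Hxl, E; auto.
  - exists z. intros i. apply Hc. intros n. destruct (Hz n i) as [y [Hy Hyl]].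
    exists y. split; auto. apply cylset_rprefix; auto.
Qed.

Lemma nested_limit (x : nat -> Cantor) (N : nat -> nat) :
  (forall k, (k <= N k)%nat) -> (forall k, (N k <= N (S k))%nat) ->
  (forall k, agree (N k) (x k) (x (S k))) ->
  exists z, forall k, agree (N k) (x k) z.
Proof.
  intros HNk HNmon Hstep.
  assert (Hmon : forall j k, (j <= k)%nat -> (N j <= N k)%nat).
  { induction 1; [lia|]. specialize (HNmon m). lia. }
  assert (Hchain : forall j k, (j <= k)%nat -> agree (N j) (x j) (x k)).
  { induction 1; [apply agree_refl|]. eapply agree_trans; [eauto|].
    eapply agree_le; [apply Hmon; eauto|]. apply Hstep. }
  exists (fun i => x (S i) i). intros k i Hi.
  destruct (Compare_dec.le_lt_dec (S i) k) as [H|H].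
  - symmetry. apply (Hchain (S i) k); auto.
  - apply (Hchain k (S i)); auto. lia.
Qed.

(** * Optimal derivation sequences *)

Scheme ord_le_mut := Induction for ord_le Sort Prop
with ord_lt_mut := Induction for ord_lt Sort Prop.

Section Derivation.
Variable C : (Cantor -> Prop) -> Prop.

Lemma step_sub P x : deriv_step C P x -> P x.
Proof. intros [H _]; auto. Qed.

Lemma step_mono (P Q : Cantor -> Prop) x : (forall y, P y -> Q y) ->
  deriv_step C P x -> deriv_step C Q x.
Proof.
  intros HPQ [Hx Hn]. split; auto. intros [U [HU [HUx [C0 [HC0 H]]]]].
  apply Hn. exists U; repeat split; auto. exists C0; split; auto.
Qed.

Lemma deriv_mono a b x : ord_le a b -> deriv_seq C b x -> deriv_seq C a x.
Proof.
  intros Hab. revert x.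
  apply (ord_le_mut (fun a b _ => forall x, deriv_seq C b x -> deriv_seq C a x)
                    (fun a b _ => forall x, deriv_seq C b x -> deriv_seq C (OS a) x));
    simpl; eauto using step_mono.
Qed.

Lemma deriv_closed a : closed (deriv_seq C a).
Proof.
  induction a as [|a IH|h IH]; intros x Hx; simpl.
  - auto.
  - split.
    + apply IH. intros n. destruct (Hx n) as [y [Hy1 Hy2]]. exists y; split; auto.
      apply step_sub in Hy2; auto.
    + intros [U [HU [HUx [C0 [HC0 H]]]]]. destruct (HU x HUx) as [n Hn].
      destruct (Hx n) as [y [Hxy [_ Hy]]]. apply Hy.
      exists U; repeat split; auto. exists C0; split; auto.
  - intros n. apply IH. intros m. destruct (Hx m) as [y [Hy1 Hy2]]. exists y; split; auto.
Qed.

Lemma deriv_lim a x : (forall nu, ord_lt nu a -> deriv_seq C (OS nu) x) -> deriv_seq C a x.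
Proof.
  induction a as [|a IH|h IH]; intros H; simpl.
  - auto.
  - apply (H a). apply ord_lt_S.
  - intros n. apply IH. intros nu Hnu. apply H. econstructor; eauto.
Qed.

(* A point leaves the sequence at a successor stage: the least [rho] with
   [x] outside stage [rho+1] keeps [x] at stage [rho]. *)
Lemma deriv_exit a x : ~ deriv_seq C a x ->
  exists rho, deriv_seq C rho x /\ ~ deriv_seq C (OS rho) x.
Proof.
  intros Ha.
  assert (Hs : ~ deriv_seq C (OS a) x) by (intros H; apply Ha; exact (step_sub _ _ H)).
  destruct (ord_min (fun nu => ~ deriv_seq C (OS nu) x) a Hs) as [rho [Hrho Hmin]].
  exists rho. split; auto. apply deriv_lim. intros nu Hnu. apply NNPP. intros H.
  apply (ord_le_lt_false rho nu); auto.
Qed.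

Lemma removed_open (P : Cantor -> Prop) z : P z -> ~ deriv_step C P z ->
  exists N, forall y, agree N z y -> ~ deriv_step C P y.
Proof.
  intros Hz Hn. apply NNPP. intros H. apply Hn. split; auto.
  intros [U [HU [HUz [C0 [HC0 HC]]]]]. apply H. destruct (HU z HUz) as [N HN].
  exists N. intros y Hy [_ Hny]. apply Hny. exists U; repeat split; auto.
  exists C0; split; auto.
Qed.

End Derivation.

(* Coarser families derive more slowly: if every member of [C'] is covered
   by a member of [C], the [C]-sequence lies inside the [C']-sequence. *)
Lemma deriv_refine (C C' : (Cantor -> Prop) -> Prop) :
  (forall C0', C' C0' -> exists C0, C C0 /\ forall y, C0' y -> C0 y) ->
  forall a x, deriv_seq C a x -> deriv_seq C' a x.
Proof.
  intros HCC a. induction a as [|a IH|h IH]; intros x Hx; simpl in *; auto.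
  destruct Hx as [Hx Hn]. split; auto.
  intros [U [HU [HUx [C0' [HC0' H]]]]]. apply Hn. exists U; repeat split; auto.
  destruct (HCC _ HC0') as [C0 [HC0 Hsub]]. exists C0; split; auto.
Qed.

(** * Baire category for Baire class 1 functions *)

(* Otherwise we could shrink
   cylinders around points of [P] avoiding [E 0], [E 1], ... in turn and
   their limit would be a point of [P] in no [E n]. *)
Lemma baire_closed (P : Cantor -> Prop) (E : nat -> Cantor -> Prop) :
  closed P -> (forall n, closed (E n)) -> (forall x, P x -> exists n, E n x) ->
  forall x0, P x0 -> exists n x N, P x /\ forall y, agree N x y -> P y -> E n y.
Proof.
  intros HP HE Hcov x0 Hx0. apply NNPP. intros Hn.
  assert (Hshrink : forall k x N, P x -> exists y L, agree N x y /\ P y /\ (N < L)%nat /\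
                      forall w, agree L y w -> ~ E k w).
  { intros k x N Hx. apply NNPP. intros H2. apply Hn. exists k, x, N. split; auto.
    intros y Hy Py. apply NNPP. intros Ey.
    destruct (closed_compl_open _ _ (HE k) Ey) as [L HL].
    apply H2. exists y, (S (Nat.max L N)). repeat split; auto; [lia|].
    intros w Hw. apply HL. eapply agree_le; [|eauto]. lia. }
  set (spec := fun k (s t : Cantor * nat) => P (fst s) ->
         agree (snd s) (fst s) (fst t) /\ P (fst t) /\ (snd s < snd t)%nat /\
         forall w, agree (snd t) (fst t) w -> ~ E k w).
  assert (Hnext : forall k s, exists t, spec k s t).
  { intros k [x N]. destruct (classic (P x)) as [Hx|Hx].
    - destruct (Hshrink k x N Hx) as [y [L H]]. exists (y, L). intros _; exact H.
    - exists (x, N). intros Hx'; contradiction. }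
  set (chain := fix chain k : Cantor * nat :=
         match k with O => (x0, O) | S k => epsilon (inhabits (x0, O)) (spec k (chain k)) end).
  assert (Hstep : forall k, spec k (chain k) (chain (S k)))
    by (intros k; apply (epsilon_spec _ _ (Hnext k (chain k)))).
  assert (HPk : forall k, P (fst (chain k))).
  { induction k; [exact Hx0|apply Hstep; auto]. }
  assert (HNk : forall k, (k <= snd (chain k))%nat).
  { induction k; [simpl; lia|]. destruct (Hstep k (HPk k)) as [_ [_ [H _]]]. lia. }
  destruct (nested_limit (fun k => fst (chain k)) (fun k => snd (chain k))) as [z Hz];
    auto; try (intros k; destruct (Hstep k (HPk k)) as [H1 [_ [H3 _]]]; auto; lia).
  assert (HPz : P z).
  { apply HP. intros n. exists (fst (chain n)). split; [|apply HPk].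
    apply agree_sym. eapply agree_le; [apply HNk|apply Hz]. }
  destruct (Hcov z HPz) as [k Hk].
  destruct (Hstep k (HPk k)) as [_ [_ [_ Hout]]]. exact (Hout z (Hz (S k)) Hk).
Qed.

Ltac rabs := unfold Rabs in *; repeat (destruct Rcase_abs); lra.

Lemma lim_bound (u : nat -> R) l c eps n : Un_cv u l ->
  (forall m, (m >= n)%nat -> Rabs (u m - c) <= eps) -> Rabs (l - c) <= eps.
Proof.
  intros Hu Hb. destruct (Rle_dec (Rabs (l - c)) eps) as [H|H]; auto.
  exfalso. destruct (Hu (Rabs (l - c) - eps)) as [N HN]; [lra|].
  specialize (HN (Nat.max N n) ltac:(lia)). specialize (Hb (Nat.max N n) ltac:(lia)).
  unfold Rdist in HN. rabs.
Qed.

Section BaireOne.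
Variable fn : nat -> Cantor -> R.
Hypothesis Hcont : forall n, cont_R (fn n).
Variable eps : R.

Definition settled (n : nat) (x : Cantor) : Prop :=
  forall m, (m >= n)%nat -> Rabs (fn m x - fn n x) <= eps.

Lemma settled_closed n : closed (settled n).
Proof.
  intros x Hx m Hm. destruct (Rle_dec (Rabs (fn m x - fn n x)) eps) as [H|H]; auto.
  exfalso. set (d := (Rabs (fn m x - fn n x) - eps) / 2).
  destruct (Hcont m x d) as [N1 HN1]; [unfold d; lra|].
  destruct (Hcont n x d) as [N2 HN2]; [unfold d; lra|].
  destruct (Hx (Nat.max N1 N2)) as [y [Hy Hy2]].
  specialize (Hy2 m Hm).
  specialize (HN1 y (agree_le N1 (Nat.max N1 N2) _ _ ltac:(lia) Hy)).
  specialize (HN2 y (agree_le N2 (Nat.max N1 N2) _ _ ltac:(lia) Hy)).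
  apply Rnot_le_lt in H. unfold d in *. rabs.
Qed.

Lemma settled_cover (f : Cantor -> R) : (forall x, Un_cv (fun n => fn n x) (f x)) ->
  0 < eps -> forall x, exists n, settled n x.
Proof.
  intros Hconv Heps x. destruct (Hconv x (eps / 2)) as [N HN]; [lra|].
  exists N. intros m Hm. pose proof (HN m Hm). pose proof (HN N (le_n _)).
  unfold Rdist in *. rabs.
Qed.

End BaireOne.

(* Every nonempty closed set loses a point under one derivation step for
   a Baire class 1 function: near a point where all approximations have
   settled, [f] stays within [2e/3] of a single value. *)
Lemma baire_step f (Hf : Baire1 f) (p e : Q) (He : 0 < Q2R e) (P : Cantor -> Prop) :
  closed P -> (exists x, P x) -> exists z, P z /\ ~ deriv_step (bfam f p e) P z.
Proof.
  intros HP [x0 Hx0]. destruct Hf as [fn [Hcont Hconv]].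
  set (eps := Q2R e / 3).
  destruct (baire_closed P (settled fn eps) HP (settled_closed fn Hcont eps)
              (fun x _ => settled_cover fn eps f Hconv ltac:(unfold eps; lra) x) x0 Hx0)
    as [n [x [N [Hx HE]]]].
  destruct (Hcont n x eps ltac:(unfold eps; lra)) as [N1 HN1].
  exists x. split; auto. intros [_ Hn]. apply Hn.
  exists (fun y => agree (Nat.max N N1) x y). split; [apply open_cyl|].
  split; [apply agree_refl|].
  assert (Hb : forall y, P y -> agree (Nat.max N N1) x y -> Rabs (f y - fn n x) < 2 * eps).
  { intros y Py Hy. pose proof (HE y (agree_le N (Nat.max N N1) _ _ ltac:(lia) Hy) Py) as Hm.
    pose proof (lim_bound _ _ _ _ _ (Hconv y) Hm) as H1.
    pose proof (HN1 y (agree_le N1 (Nat.max N N1) _ _ ltac:(lia) Hy)) as H2. rabs. }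
  destruct (Rle_dec (fn n x) (Q2R p)) as [Hv|Hv].
  - exists (fun y => f y < Q2R p + Q2R e). split; [left; auto|].
    intros y Py Uy. specialize (Hb y Py Uy). unfold eps in *. rabs.
  - exists (fun y => Q2R p - Q2R e < f y). split; [right; auto|].
    intros y Py Uy. specialize (Hb y Py Uy). unfold eps in *. rabs.
Qed.

(** * Existence of alpha(f,p,e) and of the rank |f|_alpha *)

Lemma Q2R_pos e : (0 < e)%Q -> 0 < Q2R e.
Proof. intros H. apply Qlt_Rlt in H. rewrite RMicromega.Q2R_0 in H. auto. Qed.

(* Binary lists coded by positive numbers, to index all basic cylinders. *)
Fixpoint list_of_pos (p : positive) : list bool :=
  match p with xH => nil | xO p => false :: list_of_pos p | xI p => true :: list_of_pos p end.

Fixpoint pos_of_list (l : list bool) : positive :=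
  match l with nil => xH | false :: l => xO (pos_of_list l) | true :: l => xI (pos_of_list l) end.

Lemma list_of_pos_of_list l : list_of_pos (pos_of_list l) = l.
Proof. induction l as [|[|] l IH]; simpl; congruence. Qed.

(* For
   each cylinder choose a stage missing it (if any); at the supremum [s] of
   these stages a nonempty [P^s] would lose a whole cylinder at [s+1] by
   [baire_step], yet that cylinder's chosen stage lies below [s]. *)
Lemma deriv_terminates f (Hf : Baire1 f) p e (He : 0 < Q2R e) :
  exists s, forall x, ~ P_seq f p e s x.
Proof.
  unfold P_seq. set (D := deriv_seq (bfam f p e)).
  set (miss := fun l => epsilon (inhabits OZ) (fun nu => forall y, cylset l y -> ~ D nu y)).
  set (s := OL (fun n => miss (list_of_pos (Pos.of_nat n)))).
  exists s. intros x Hx.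
  destruct (baire_step f Hf p e He (D s) (deriv_closed _ _) (ex_intro _ x Hx))
    as [z [Hz Hnot]].
  destruct (removed_open _ _ _ Hz Hnot) as [N HN].
  set (l := rprefix z N).
  assert (Hl : forall y, cylset l y -> ~ D (miss l) y).
  { apply (epsilon_spec (inhabits OZ) (fun nu => forall y, cylset l y -> ~ D nu y)).
    exists (OS s). intros y Hy. apply HN. apply cylset_rprefix; auto. }
  apply (Hl z); [apply cylset_rprefix, agree_refl|].
  eapply deriv_mono; [|exact Hz].
  apply (ord_le_L _ _ (Pos.to_nat (pos_of_list l))).
  rewrite Pos2Nat.id, list_of_pos_of_list. apply ord_le_refl.
Qed.

Lemma alpha_exists f (Hf : Baire1 f) p e (He : (0 < e)%Q) : exists a, is_alpha f p e a.
Proof.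
  destruct (deriv_terminates f Hf p e (Q2R_pos e He)) as [s Hs].
  destruct (ord_min (fun b => forall x, ~ P_seq f p e b x) s Hs) as [a [Ha1 Ha2]].
  exists a; split; auto.
Qed.

Definition enum_Q (n : nat) : Q :=
  let (a, r) := Stdlib.Arith.Cantor.of_nat n in
  let (b, c) := Stdlib.Arith.Cantor.of_nat r in
  Qmake (Z.of_nat a - Z.of_nat b)%Z (Pos.of_nat c).

Lemma enum_Q_surj q : exists n, enum_Q n = q.
Proof.
  destruct q as [z d].
  exists (Stdlib.Arith.Cantor.to_nat
            (Z.to_nat z, Stdlib.Arith.Cantor.to_nat (Z.to_nat (- z), Pos.to_nat d))).
  unfold enum_Q. rewrite !Stdlib.Arith.Cantor.cancel_of_to, Pos2Nat.id. f_equal. lia.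
Qed.

Definition enum_QQ (n : nat) : Q * Q :=
  let (a, b) := Stdlib.Arith.Cantor.of_nat n in (enum_Q a, enum_Q b).

Lemma enum_QQ_surj p e : exists n, enum_QQ n = (p, e).
Proof.
  destruct (enum_Q_surj p) as [a Ha]. destruct (enum_Q_surj e) as [b Hb].
  exists (Stdlib.Arith.Cantor.to_nat (a, b)). unfold enum_QQ.
  rewrite Stdlib.Arith.Cantor.cancel_of_to. congruence.
Qed.

Lemma rank_exists f (Hf : Baire1 f) : exists r, is_rank f r.
Proof.
  set (h := fun n => let (p, e) := enum_QQ n in
     if Qlt_le_dec 0 e then epsilon (inhabits OZ) (is_alpha f p e) else OZ).
  exists (OL h). split.
  - intros p e a He Ha. destruct (enum_QQ_surj p e) as [n Hn].
    apply (ord_le_L _ _ n). unfold h. rewrite Hn.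
    destruct (Qlt_le_dec 0 e) as [H|H].
    + apply Ha. apply (epsilon_spec (inhabits OZ) (is_alpha f p e) (alpha_exists f Hf p e He)).
    + exfalso. apply (Qlt_not_le 0 e); auto.
  - intros r' Hr'. constructor. intros n. unfold h. destruct (enum_QQ n) as [p e].
    destruct (Qlt_le_dec 0 e) as [H|H]; [|constructor].
    apply (Hr' p e); auto.
    apply (epsilon_spec (inhabits OZ) (is_alpha f p e) (alpha_exists f Hf p e H)).
Qed.

(** * A tt1-reduction bounds the rank from above *)

Lemma correct_exists y q d : 0 < Q2R d -> exists b, correct y q d b.
Proof.
  intros Hd. destruct (Rlt_le_dec y (Q2R q + Q2R d)).
  - exists true; left; auto.
  - exists false; right; split; auto; lra.
Qed.

Lemma bfam_of_answer f p e c :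
  exists C0, bfam f p e C0 /\ forall z, correct (f z) p e c -> C0 z.
Proof.
  destruct c.
  - exists (fun y => f y < Q2R p + Q2R e). split; [left; auto|].
    intros z [[_ H]|[H _]]; [auto|discriminate].
  - exists (fun y => Q2R p - Q2R e < f y). split; [right; auto|].
    intros z [[H _]|[_ H]]; [discriminate|auto].
Qed.

Section Pullback.
Variables f g : Cantor -> R.
Variables (p e q d : Q) (k : Cantor -> Cantor) (r : nat) (h : list bool -> bool -> bool).
Hypothesis Hk : cont_C k.
Hypothesis Hh : forall A b, correct (g (k A)) q d b -> correct (f A) p e (h (prefix A r) b).

(* Where [h] depends on the answer, the derivatives of [f] map into those
   of [g]: a neighbourhood of [k x] on which one answer about [g] is correct
   pulls back, intersected with the [r]-cylinder of [x], to a neighbourhood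
   of [x] on which one answer about [f] is correct. *)
Lemma pullback nu : forall x, h (prefix x r) true <> h (prefix x r) false ->
  P_seq f p e nu x -> P_seq g q d nu (k x).
Proof.
  unfold P_seq. induction nu as [|nu IH|hh IH]; intros x Hnc Hx; simpl in *; auto.
  destruct Hx as [Hx Hn]. split; [apply IH; auto|].
  intros [V [HV [HVx [C0 [HC0 HC]]]]]. apply Hn.
  exists (fun z => agree r x z /\ V (k z)). split.
  { intros z [Hz1 Hz2]. destruct (cont_open k V Hk HV z Hz2) as [n Hn'].
    exists (Nat.max n r). intros w Hw. split.
    - eapply agree_trans; [eauto|]. eapply agree_le; [|eauto]. lia.
    - apply Hn'. eapply agree_le; [|eauto]. lia. }
  split; [split; auto; apply agree_refl|].
  assert (Hans : forall b, (forall z, deriv_seq (bfam g q d) nu z -> V z ->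
                   correct (g z) q d b) ->
                 exists C0', bfam f p e C0' /\ forall z,
                   deriv_seq (bfam f p e) nu z -> agree r x z /\ V (k z) -> C0' z).
  { intros b Hb. destruct (bfam_of_answer f p e (h (prefix x r) b)) as [C0' [HC0' HC']].
    exists C0'. split; auto. intros z Pz [Hz1 Hz2]. apply HC'.
    rewrite (prefix_agree x z r Hz1). apply Hh, Hb; auto.
    apply IH; auto. rewrite <- (prefix_agree x z r Hz1); auto. }
  destruct HC0 as [E|E]; subst C0; [apply (Hans true)|apply (Hans false)];
    intros z Pz Vz; [left|right]; split; auto.
Qed.

Lemma constant_answer x : h (prefix x r) true = h (prefix x r) false ->
  0 < Q2R d -> ~ P_seq f p e (OS OZ) x.
Proof.
  intros Hc Hd [_ Hn]. apply Hn.
  destruct (bfam_of_answer f p e (h (prefix x r) true)) as [C0' [HC0' HC']].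
  exists (fun z => agree r x z). split; [apply open_cyl|]. split; [apply agree_refl|].
  exists C0'. split; auto. intros z _ Hz. apply HC'.
  rewrite (prefix_agree x z r Hz).
  destruct (correct_exists (g (k z)) q d Hd) as [[|] Hb].
  - apply Hh; auto.
  - rewrite <- (prefix_agree x z r Hz), Hc, (prefix_agree x z r Hz). apply Hh; auto.
Qed.

End Pullback.

(* Stage 0 is the whole space, so alpha(f,p,e) is at least 1. *)
Lemma alpha_pos f p e a : is_alpha f p e a -> ord_le (OS OZ) a.
Proof.
  intros [H1 _]. constructor. apply ord_not_le. intros Ha.
  apply (H1 (fun _ => true)). eapply deriv_mono; eauto. simpl; auto.
Qed.

Lemma tt1_rank f g (Hg : Baire1 g) rf rg :
  is_rank f rf -> is_rank g rg -> tt1 f g -> ord_le rf rg.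
Proof.
  intros Hrf Hrg Htt. apply (proj2 Hrf). intros p e a He Ha.
  destruct (Htt p e He) as [k [q [d [r [h [Hk [Hd Hh]]]]]]].
  destruct (alpha_exists g Hg q d Hd) as [ag Hag].
  eapply ord_le_trans; [|apply (proj1 Hrg q d ag Hd Hag)].
  apply (proj2 Ha). intros x Hx.
  destruct (classic (h (prefix x r) true = h (prefix x r) false)) as [Hc|Hc].
  - apply (constant_answer f g p e q d k r h Hh x Hc (Q2R_pos d Hd)).
    eapply deriv_mono; [|exact Hx]. apply (alpha_pos g q d); auto.
  - apply (proj1 Hag (k x)). eapply pullback; eauto.
Qed.

(** * Rank comparison yields a tt1-reduction *)

(* In a compact space, a derivation sequence that becomes empty does so at
   a successor stage whose predecessor is nonempty: were the least empty
   successor stage [b+1] to have [P^b] empty, the nonempty closed stages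
   [P^(nu+1)], [nu < b], would have a common point, lying in [P^b]. *)
Lemma last_nonempty_stage C s : (forall x, ~ deriv_seq C s x) ->
  exists b, (exists x, deriv_seq C b x) /\ forall x, ~ deriv_seq C (OS b) x.
Proof.
  intros Hs.
  destruct (ord_min (fun nu => forall x, ~ deriv_seq C (OS nu) x) s) as [b [Hb1 Hb2]].
  { intros x Hx. apply (Hs x). eapply step_sub; eauto. }
  exists b. split; auto. apply NNPP. intros Hn.
  destruct (directed_compact {nu | ord_lt nu b} (fun i => deriv_seq C (OS (proj1_sig i))))
    as [x Hx].
  - intros i. apply deriv_closed.
  - intros [nu Hnu]. cbn [proj1_sig]. apply NNPP. intros H. apply (ord_le_lt_false b nu); auto.
    apply Hb2. intros x Hx. apply H. eauto.
  - intros [i Hi] [j Hj]. cbn [proj1_sig]. destruct (ord_total i j) as [H|H].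
    + exists (exist _ j Hj). cbn [proj1_sig]. intros x Hx. split; auto.
      eapply deriv_mono; [|exact Hx]. apply ord_le_S_mono; auto.
    + exists (exist _ i Hi). cbn [proj1_sig]. intros x Hx. split; auto.
      eapply deriv_mono; [|exact Hx]. apply ord_le_S_mono, ord_lt_le; auto.
  - apply Hn. exists x. apply deriv_lim. intros nu Hnu. apply (Hx (exist _ nu Hnu)).
Qed.

Lemma rank_witness g b rg : is_rank g rg ->
  ~ ord_le rg b -> exists q d, (0 < d)%Q /\ exists y, P_seq g q d b y.
Proof.
  intros [_ Hleast] Hn. apply NNPP. intros H. apply Hn. apply Hleast.
  intros q d a Hd Ha. apply (proj2 Ha). intros x Hx. apply H. exists q, d. split; eauto.
Qed.

Lemma Q2R_half d : Q2R (d / 2) = Q2R d / 2.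
Proof. rewrite Q2R_div; [|discriminate]. unfold Q2R at 2; simpl. field. Qed.

(* Halving the tolerance and recentring on the side of [q] opposite to
   [g y] keeps [y] in the derivative (finer families derive more slowly)
   and puts [g y] outside the new interval. *)
Lemma recentre g q d b y : (0 < d)%Q -> P_seq g q d b y ->
  exists q' d', (0 < d')%Q /\ P_seq g q' d' b y /\
     (Q2R q' + Q2R d' <= g y \/ g y <= Q2R q' - Q2R d').
Proof.
  intros Hd Hy. pose proof (Q2R_pos d Hd) as Hd'.
  assert (Hd2 : (0 < d / 2)%Q).
  { apply Rlt_Qlt. rewrite Q2R_half, RMicromega.Q2R_0. lra. }
  assert (Hfiner : forall q', Rabs (Q2R q' - Q2R q) <= Q2R d / 2 ->
            P_seq g q' (d / 2) b y).
  { intros q' Hq'. unfold P_seq in *. eapply deriv_refine; [|exact Hy].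
    intros C0' [E|E]; subst C0'; rewrite Q2R_half.
    - exists (fun y => g y < Q2R q + Q2R d). split; [left; auto|]. intros z Hz; rabs.
    - exists (fun y => Q2R q - Q2R d < g y). split; [right; auto|]. intros z Hz; rabs. }
  destruct (Rle_dec (g y) (Q2R q)) as [H|H].
  - exists (q + d / 2)%Q, (d / 2)%Q. rewrite Q2R_plus, Q2R_half in *.
    split; [auto|split; [apply Hfiner; rewrite Q2R_plus, Q2R_half; rabs|lra]].
  - assert (Hm : Q2R (q - d / 2) = Q2R q - Q2R d / 2).
    { unfold Qminus. rewrite Q2R_plus, Q2R_opp, Q2R_half. ring. }
    exists (q - d / 2)%Q, (d / 2)%Q. rewrite Hm, Q2R_half.
    split; [auto|split; [apply Hfiner; rewrite Hm; rabs|lra]].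
Qed.

(* The construction of the reduction for fixed [p], [e], [q], [d]: [beta]
   is a stage at which the derivation sequence of [f] is exhausted, and
   [ystar] (below) a point of the [beta]-th derivative of [g]. *)
Section Reduction.
Variables f g : Cantor -> R.
Variables p e q d : Q.
Variable beta : Ord.
Hypothesis Hbeta : forall x, ~ P_seq f p e (OS beta) x.

Definition region nu l z := P_seq f p e nu z /\ cylset l z.

Definition mono nu l :=
  (forall z, region nu l z -> f z < Q2R p + Q2R e) \/
  (forall z, region nu l z -> Q2R p - Q2R e < f z).

(* [S] contains a point where answer 1, resp. answer 0, is wrong. *)
Definition needA (S : Cantor -> Prop) := exists z, S z /\ Q2R p + Q2R e <= f z.
Definition needB (S : Cantor -> Prop) := exists z, S z /\ f z <= Q2R p - Q2R e.

Lemma mono_cases nu l : mono nu l -> needA (region nu l) -> needB (region nu l) -> False.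
Proof.
  intros [H|H] [z [Hz1 Hz2]] [w [Hw1 Hw2]].
  - specialize (H z Hz1). lra.
  - specialize (H w Hw1). lra.
Qed.

Lemma region_mono nu nu' l l' : incl l l' -> ord_le nu' nu ->
  forall z, region nu l z -> region nu' l' z.
Proof. intros Hi Hn z [H1 H2]; split; auto. eapply deriv_mono; eauto. Qed.

Lemma mono_sub nu nu' l l' : incl l l' -> ord_le nu' nu -> mono nu' l' -> mono nu l.
Proof.
  intros Hi Hn [H|H]; [left|right]; intros z Hz; apply H; eapply region_mono; eauto.
Qed.

(* Since [P^(beta+1)] is empty, by compactness there is a length [r] such
   that on every cylinder of length [r] one answer is correct on [P^beta]. *)
Lemma uniform_mono_length : exists r, forall l, length l = r -> mono beta l.
Proof.
  apply NNPP. intros Hn.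
  assert (HK : forall n, exists x, P_seq f p e beta x /\ ~ mono beta (rprefix x n)).
  { intros n. apply NNPP. intros H. apply Hn. exists n. intros l Hl.
    apply NNPP. intros Hm. apply Hm. left. intros z [Hz1 Hz2]. exfalso.
    apply H. exists z. split; auto. unfold cylset in Hz2. rewrite Hl in Hz2. rewrite Hz2. auto. }
  destruct (directed_compact nat (fun n x => P_seq f p e beta x /\ ~ mono beta (rprefix x n)))
    as [x Hx]; auto.
  - intros n x Hx. split.
    + apply deriv_closed. intros m. destruct (Hx m) as [y [Hy1 [Hy2 _]]]. eauto.
    + destruct (Hx n) as [y [Hy1 [_ Hy2]]]. apply rprefix_agree in Hy1. rewrite Hy1. auto.
  - intros i j. exists (Nat.max i j). intros x [Hx1 Hx2].
    assert (Hs : forall m, (m <= Nat.max i j)%nat -> ~ mono beta (rprefix x m)).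
    { intros m Hm Hmo. apply Hx2. eapply mono_sub; [|apply ord_le_refl|exact Hmo].
      apply incl_rprefix; auto. }
    split; split; auto; apply Hs; lia.
  - apply (Hbeta x). split; [apply (Hx O)|].
    intros [U [HU [HUx [C0 [HC0 HC]]]]]. destruct (HU x HUx) as [N HN].
    apply (proj2 (Hx N)). destruct HC0 as [E|E]; subst C0; [left|right];
    intros z [Hz1 Hz2]; apply HC; auto; apply HN; apply cylset_rprefix; auto.
Qed.

Definition misses nu l := forall z, cylset l z -> ~ P_seq f p e (OS nu) z.

Definition lrank l :=
  epsilon (inhabits OZ) (fun nu => misses nu l /\ forall mu, misses mu l -> ord_le nu mu).

Lemma lrank_spec l : misses (lrank l) l /\ forall mu, misses mu l -> ord_le (lrank l) mu.
Proof.
  apply (epsilon_spec (inhabits OZ) (fun nu => misses nu l /\ forall mu, misses mu l -> ord_le nu mu)).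
  apply (ord_min (fun nu => misses nu l) beta). intros z _; apply Hbeta.
Qed.

Lemma lrank_le_beta l : ord_le (lrank l) beta.
Proof. apply (proj2 (lrank_spec l)). intros z _; apply Hbeta. Qed.

Lemma lrank_sub l l' : incl l l' -> ord_le (lrank l) (lrank l').
Proof.
  intros H. apply (proj2 (lrank_spec l)). intros z Hz. apply (proj1 (lrank_spec l')). auto.
Qed.

Definition monoL l := mono (lrank l) l.

(* The stage of the derivative of [g] the tracking point must occupy while
   reading [l]: the local rank, plus one unless one answer is already
   correct on the last nonempty region. *)
Definition trank l := if excluded_middle_informative (monoL l) then lrank l else OS (lrank l).

Lemma trank_cases l :
  (monoL l /\ trank l = lrank l) \/ (~ monoL l /\ trank l = OS (lrank l)).
Proof. unfold trank. destruct excluded_middle_informative; auto. Qed.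

Lemma lrank_le_trank l : ord_le (lrank l) (trank l).
Proof.
  destruct (trank_cases l) as [[_ E]|[_ E]]; rewrite E.
  - apply ord_le_refl.
  - apply ord_lt_le, ord_lt_S.
Qed.

Lemma trank_sub l l' : incl l l' -> ord_le (trank l) (trank l').
Proof.
  intros Hi. pose proof (lrank_sub l l' Hi) as Hm.
  destruct (trank_cases l) as [[H1 E1]|[H1 E1]]; rewrite E1.
  - eapply ord_le_trans; [exact Hm|apply lrank_le_trank].
  - destruct (ord_total (lrank l') (lrank l)) as [H|H].
    + destruct (trank_cases l') as [[H2 E2]|[H2 E2]]; rewrite E2.
      * exfalso. apply H1. eapply mono_sub; eauto.
      * apply ord_le_S_mono; auto.
    + eapply ord_le_trans; [|apply lrank_le_trank]. constructor; auto.
Qed.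

Lemma lrank_near A : exists N, forall n, (n >= N)%nat ->
  monoL (rprefix A n) /\ region (lrank (rprefix A n)) (rprefix A n) A.
Proof.
  destruct (deriv_exit _ _ _ (Hbeta A)) as [rho [HArho Hrho]].
  assert (HU : exists U, is_open U /\ U A /\ exists C0, bfam f p e C0 /\
             forall y, P_seq f p e rho y -> U y -> C0 y).
  { apply NNPP. intros H. apply Hrho. split; auto. }
  destruct HU as [U [HUo [HUA [C0 [HC0 HC]]]]].
  destruct (HUo A HUA) as [N HN]. exists N. intros n Hn. set (l := rprefix A n).
  assert (Hl : forall z, cylset l z -> U z).
  { intros z Hz. apply HN. apply cylset_rprefix in Hz. eapply agree_le; [|exact Hz]; lia. }
  assert (Hle : ord_le (lrank l) rho).
  { apply (proj2 (lrank_spec l)). intros z Hz [Hz1 Hz2]. apply Hz2.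
    exists U. split; auto. split; auto. exists C0; split; auto. }
  assert (Hge : ord_le rho (lrank l)).
  { apply ord_not_lt. intros Hlt. apply (proj1 (lrank_spec l) A).
    - apply cylset_rprefix, agree_refl.
    - eapply deriv_mono; [|exact HArho]. constructor; auto. }
  split.
  - destruct HC0 as [E|E]; subst C0; [left|right]; intros z [Hz1 Hz2];
      (apply HC; [eapply deriv_mono; eauto|auto]).
  - split; [eapply deriv_mono; eauto|apply cylset_rprefix, agree_refl].
Qed.

(* Colours of points of [g]: answer 1, resp. answer 0, about [g] is wrong. *)
Definition GA y := Q2R q + Q2R d <= g y.
Definition GB y := g y <= Q2R q - Q2R d.

(* The colour forced when answer 1 (resp. 0) about [f] is wrong, relative
   to the sign [s] by which answers about [g] are flipped. *)
Definition XA (s : bool) y := if s then GB y else GA y.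
Definition XB (s : bool) y := if s then GA y else GB y.

Definition admissible s l y := P_seq g q d (trank l) y /\
  (monoL l -> (needA (region (lrank l) l) -> XA s y) /\ (needB (region (lrank l) l) -> XB s y)).

Lemma admissible_keep s l l' y : incl l l' -> admissible s l' y -> ~ ord_lt (trank l) (trank l') -> admissible s l y.
Proof.
  intros Hi [Hy1 Hy2] Hn. split.
  - eapply deriv_mono; [apply trank_sub; eauto|]. exact Hy1.
  - intros Hmo. destruct (trank_cases l) as [[_ E1]|[H1 E1]]; [|tauto].
    destruct (ord_total (lrank l') (lrank l)) as [H|H].
    + destruct (trank_cases l') as [[H2 E2]|[H2 E2]].
      * destruct (Hy2 H2) as [A1 A2].
        split; intros [z [Hz1 Hz2]]; [apply A1|apply A2]; exists z; split; auto;
          eapply region_mono; eauto.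
      * exfalso. apply Hn. rewrite E1, E2. constructor. apply lrank_sub; auto.
    + exfalso. apply Hn. rewrite E1. eapply ord_lt_le_trans; [exact H|apply lrank_le_trank].
Qed.

Lemma both_colours mu y n : P_seq g q d (OS mu) y ->
  (exists y', agree n y y' /\ P_seq g q d mu y' /\ GA y') /\
  (exists y', agree n y y' /\ P_seq g q d mu y' /\ GB y').
Proof.
  intros [Hy Hn]. split; apply NNPP; intros H; apply Hn;
    exists (fun z => agree n y z); (split; [apply open_cyl|]);
    (split; [apply agree_refl|]).
  - exists (fun z => g z < Q2R q + Q2R d). split; [left; auto|].
    intros z Pz Uz. apply Rnot_le_lt. intros Hz. apply H. exists z; repeat split; auto.
  - exists (fun z => Q2R q - Q2R d < g z). split; [right; auto|].
    intros z Pz Uz. apply Rnot_le_lt. intros Hz. apply H. exists z; repeat split; auto.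
Qed.

Lemma admissible_move s l l' y n : incl l l' -> admissible s l' y -> ord_lt (trank l) (trank l') ->
  exists y', agree n y y' /\ admissible s l y'.
Proof.
  intros Hi [Hy1 _] Hlt.
  assert (Hy : P_seq g q d (OS (trank l)) y)
    by (eapply deriv_mono; [|exact Hy1]; constructor; auto).
  destruct (both_colours (trank l) y n Hy) as [[ya [Ha1 [Ha2 Ha3]]] [yb [Hb1 [Hb2 Hb3]]]].
  destruct (classic (monoL l /\ needA (region (lrank l) l))) as [[Hm HA]|HnA].
  - assert (~ needB (region (lrank l) l)) by (intros HB; eapply mono_cases; eauto).
    destruct s; [exists yb|exists ya]; repeat split; auto; tauto.
  - destruct s; [exists ya|exists yb]; repeat split; auto; intros; exfalso; tauto.
Qed.

Variable ystar : Cantor.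
Hypothesis Hys : P_seq g q d beta ystar.
Hypothesis Hcol : GA ystar \/ GB ystar.
Variable r : nat.
Hypothesis Hr : forall l, length l = r -> mono beta l.

(* The sign for a cylinder [s] of length [r], chosen so that [ystar], whose
   colour is fixed, is an admissible starting point. *)
Definition start_sign (s : list bool) : bool :=
  if excluded_middle_informative ((needA (region (lrank s) s) /\ GB ystar) \/
                                  (needB (region (lrank s) s) /\ GA ystar)) then true else false.

Definition oldest_bits (l : list bool) := skipn (length l - r) l.
Definition sigma l := start_sign (oldest_bits l).

Lemma oldest_bits_cons b l : (length l >= r)%nat -> oldest_bits (b :: l) = oldest_bits l.
Proof.
  intros H. unfold oldest_bits. simpl length.
  replace (S (length l) - r)%nat with (S (length l - r)) by lia. reflexivity.
Qed.

Lemma oldest_bits_full l : length l = r -> oldest_bits l = l.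
Proof. intros H. unfold oldest_bits. replace (length l - r)%nat with O by lia. reflexivity. Qed.

Lemma oldest_bits_rprefix A n : (n >= r)%nat -> oldest_bits (rprefix A n) = rprefix A r.
Proof.
  intros H. unfold oldest_bits. rewrite rprefix_length.
  replace n with ((n - r) + r)%nat at 2 by lia. generalize (n - r)%nat. intros k.
  induction k; simpl; auto.
Qed.

Lemma start_admissible s : length s = r -> admissible (start_sign s) s ystar.
Proof.
  intros Hs. split.
  - eapply deriv_mono; [|exact Hys].
    destruct (trank_cases s) as [[_ E]|[H1 E]]; rewrite E; [apply lrank_le_beta|].
    constructor. destruct (ord_total beta (lrank s)) as [H|H]; auto.
    exfalso. apply H1. eapply mono_sub; [intros z Hz; exact Hz|exact H|apply Hr; auto].
  - intros Hm. unfold start_sign, XA, XB.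
    destruct excluded_middle_informative as [Hc|Hc]; split; intros HN.
    + destruct Hc as [[_ Hc]|[Hc _]]; [exact Hc|exfalso; eapply mono_cases; eauto].
    + destruct Hc as [[Hc _]|[_ Hc]]; [exfalso; eapply mono_cases; eauto|exact Hc].
    + destruct Hcol as [H|H]; [exact H|exfalso; apply Hc; left; auto].
    + destruct Hcol as [H|H]; [exfalso; apply Hc; right; auto|exact H].
Qed.

Definition advance (s : bool) (l : list bool) (n : nat) (y : Cantor) : Cantor :=
  if excluded_middle_informative (admissible s l y) then y
  else epsilon (inhabits y) (fun y' => agree n y y' /\ admissible s l y').

Lemma advance_spec s l l' n y : incl l l' -> admissible s l' y ->
  agree n y (advance s l n y) /\ admissible s l (advance s l n y) /\
  (~ ord_lt (trank l) (trank l') -> advance s l n y = y).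
Proof.
  intros Hi Hy. unfold advance. destruct excluded_middle_informative as [Hok|Hok].
  - split; [apply agree_refl|split; auto].
  - assert (Hlt : ord_lt (trank l) (trank l')).
    { apply NNPP. intros Hn. apply Hok. eapply admissible_keep; eauto. }
    split; [|split; [|tauto]];
      apply (epsilon_spec (inhabits y) (fun y' => agree n y y' /\ admissible s l y'));
      eapply admissible_move; eauto.
Qed.

Fixpoint track (l : list bool) : Cantor :=
  match l with
  | nil => ystar
  | b :: l' => if Nat.ltb (length l') r then track l'
               else advance (sigma (b :: l')) (b :: l') (length l') (track l')
  end.

Lemma track_short l : (length l <= r)%nat -> track l = ystar.
Proof.
  induction l as [|b l IH]; simpl; intros H; auto.
  destruct (Nat.ltb_spec (length l) r); [apply IH; lia|lia].
Qed.

Lemma track_ok l : (length l >= r)%nat -> admissible (sigma l) l (track l).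
Proof.
  induction l as [|b l IH]; intros H.
  - simpl in H. unfold sigma. rewrite oldest_bits_full by (simpl; lia). apply start_admissible. simpl; lia.
  - simpl track. destruct (Nat.ltb_spec (length l) r) as [H1|H1].
    + rewrite track_short by lia. unfold sigma. rewrite oldest_bits_full by (simpl in *; lia).
      apply start_admissible. simpl in *; lia.
    + specialize (IH H1). unfold sigma in *. rewrite oldest_bits_cons in * by auto.
      apply (advance_spec _ _ l); auto. apply incl_cons.
Qed.

Lemma track_step b l : (length l >= r)%nat ->
  agree (length l) (track l) (track (b :: l)) /\
  (~ ord_lt (trank (b :: l)) (trank l) -> track (b :: l) = track l).
Proof.
  intros H. simpl track. destruct (Nat.ltb_spec (length l) r) as [H1|H1]; [lia|].
  pose proof (track_ok l H) as Hok. unfold sigma in *. rewrite oldest_bits_cons in * by auto.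
  destruct (advance_spec (start_sign (oldest_bits l)) (b :: l) l (length l) (track l) (incl_cons b l) Hok)
    as [H2 [_ H3]].
  split; auto.
Qed.

Lemma track_chain A M N : (M <= N)%nat -> agree M (track (rprefix A M)) (track (rprefix A N)).
Proof.
  induction 1; [apply agree_refl|].
  eapply agree_trans; [exact IHle|]. simpl rprefix.
  destruct (Compare_dec.le_lt_dec r m) as [Hr'|Hr'].
  - eapply agree_le; [|apply (track_step (A m) (rprefix A m))]; rewrite rprefix_length; auto.
  - rewrite !track_short; [apply agree_refl| |]; simpl; rewrite rprefix_length; lia.
Qed.

Definition track_limit (A : Cantor) : Cantor := fun i => track (rprefix A (S i)) i.

Lemma track_limit_cont : cont_C track_limit.
Proof.
  intros x m. exists m. intros y Hxy i Hi. unfold track_limit.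
  replace (rprefix y (S i)) with (rprefix x (S i)); [reflexivity|].
  apply rprefix_agree. eapply agree_le; [|exact Hxy]. lia.
Qed.

(* Along the prefixes of [A] the target stages form a decreasing sequence
   of ordinals, so they stabilise and so does the tracking point. *)
Lemma track_stabilises A : exists n0, forall m, (m >= n0)%nat ->
  track (rprefix A m) = track (rprefix A n0).
Proof.
  set (tn := fun n => trank (rprefix A n)).
  destruct (ord_min (fun nu => exists n, (n >= r)%nat /\ nu = tn n) (tn r))
    as [nu0 [[n0 [Hn0 E0]] Hmin]]; [exists r; split; auto|].
  subst nu0. exists n0.
  assert (Hdecr : forall n m, (n <= m)%nat -> ord_le (tn m) (tn n))
    by (intros n m H; apply trank_sub, incl_rprefix; auto).
  induction 1; auto. simpl rprefix.
  rewrite (proj2 (track_step (A m) (rprefix A m) ltac:(rewrite rprefix_length; lia))); auto.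
  intros Hlt. apply (ord_le_lt_false (tn n0) (tn (S m))).
  - apply Hmin. exists (S m); split; auto; lia.
  - eapply ord_lt_le_trans; [exact Hlt|]. apply Hdecr; auto.
Qed.

Lemma track_limit_eq A n0 : (forall m, (m >= n0)%nat -> track (rprefix A m) = track (rprefix A n0)) ->
  forall n, (n >= n0)%nat -> track_limit A = track (rprefix A n).
Proof.
  intros Hstab n Hn. apply functional_extensionality. intros i. unfold track_limit.
  rewrite (track_chain A (S i) (Nat.max (S i) n)) by lia.
  rewrite Hstab, <- (Hstab n) by lia. reflexivity.
Qed.

Lemma track_limit_correct A :
  (Q2R p + Q2R e <= f A -> XA (start_sign (rprefix A r)) (track_limit A)) /\
  (f A <= Q2R p - Q2R e -> XB (start_sign (rprefix A r)) (track_limit A)).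
Proof.
  destruct (track_stabilises A) as [n0 Hstab].
  destruct (lrank_near A) as [N HN].
  set (n := Nat.max r (Nat.max n0 N)). set (l := rprefix A n).
  destruct (HN n ltac:(unfold n; lia)) as [HmL HAl].
  assert (Hok := track_ok l ltac:(unfold l; rewrite rprefix_length; unfold n; lia)).
  unfold sigma, l in Hok. rewrite oldest_bits_rprefix in Hok by (unfold n; lia).
  rewrite <- (track_limit_eq A n0 Hstab n) in Hok by (unfold n; lia).
  destruct Hok as [_ Hok]. destruct (Hok HmL) as [HA HB].
  split; intros Hf; [apply HA|apply HB]; exists A; split; auto.
Qed.

End Reduction.

Lemma decode_answer f g p e q d (A y : Cantor) (s b : bool) :
  (Q2R p + Q2R e <= f A -> XA g q d s y) -> (f A <= Q2R p - Q2R e -> XB g q d s y) ->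
  correct (g y) q d b -> correct (f A) p e (xorb s b).
Proof.
  intros HA HB Hc. unfold XA, XB, GA, GB in *.
  destruct (Rlt_le_dec (f A) (Q2R p + Q2R e)) as [H1|H1].
  - destruct (Rlt_le_dec (Q2R p - Q2R e) (f A)) as [H2|H2].
    + destruct (xorb s b); [left|right]; split; auto.
    + specialize (HB H2).
      destruct s; destruct Hc as [[E Hc]|[E Hc]]; subst b; simpl;
        try (left; split; auto; lra); exfalso; lra.
  - specialize (HA H1).
    destruct s; destruct Hc as [[E Hc]|[E Hc]]; subst b; simpl;
      try (right; split; auto; lra); exfalso; lra.
Qed.

(* Given [p], [e], take the last nonempty stage [b] of [f]; as [b] lies
   below the rank of [g], some derivative of [g] at [b] is nonempty, and the
   tracking construction provides the reduction. *)
Lemma rank_tt1 f g (Hf : Baire1 f) rf rg :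
  is_rank f rf -> is_rank g rg -> ord_le rf rg -> tt1 f g.
Proof.
  intros Hrf Hrg Hle p e He.
  destruct (deriv_terminates f Hf p e (Q2R_pos e He)) as [s Hs].
  destruct (last_nonempty_stage _ s Hs) as [b [[x Hx] Hb]].
  assert (Hn : ~ ord_le rg b).
  { intros H. destruct (alpha_exists f Hf p e He) as [a Ha].
    apply (proj1 Ha x). eapply deriv_mono; [|exact Hx].
    eapply ord_le_trans; [apply (proj1 Hrf p e a He Ha)|]. eapply ord_le_trans; eauto. }
  destruct (rank_witness g b rg Hrg Hn) as [q0 [d0 [Hd0 [y0 Hy0]]]].
  destruct (recentre g q0 d0 b y0 Hd0 Hy0) as [q [d [Hd [Hy Hcol]]]].
  destruct (uniform_mono_length f p e b Hb) as [r Hr].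
  exists (track_limit f g p e q d y0 r), q, d, r, (fun l bb => xorb (start_sign f g p e q d y0 (rev l)) bb).
  split; [apply track_limit_cont; auto|]. split; auto.
  intros A bb Hc. rewrite rev_prefix.
  destruct (track_limit_correct f g p e q d b Hb y0 Hy Hcol r Hr A) as [HA HB].
  eapply decode_answer; eauto.
Qed.

Theorem mainTheorem4 (f g : Cantor -> R) (Hf : Baire1 f) (Hg : Baire1 g) :
  exists rf rg : Ord,
    is_rank f rf /\ is_rank g rg /\ (tt1 f g <-> ord_le rf rg).
Proof.
  destruct (rank_exists f Hf) as [rf Hrf]. destruct (rank_exists g Hg) as [rg Hrg].
  exists rf, rg. split; [exact Hrf|split; [exact Hrg|split]].
  - apply tt1_rank; auto.
  - apply rank_tt1; auto.
Qed.
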